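(* Let $k,k'\ge1$ be integers. For $X\in\mathcal{P}$ let $\mathcal{C}^{-1}(X)=\{(P,Q)\in\mathcal{P}^2:[P,Q]\in\{2iX,-2iX\}\}$ and $\mathcal{S}_X=\mathcal{C}^{-1}(X)\cap(\mathcal{P}_k\times\mathcal{P}_{k'})$. For $(P,Q)\in\mathcal{S}_X$, its pattern is the pair of sets $(\mathrm{supp}(P)\cap\mathrm{supp}(X),\ \mathrm{supp}(Q)\cap\mathrm{supp}(X))$, and for sets $S,T$ let $\mathcal{S}_X[S,T]$ be the set of $(P,Q)\in\mathcal{S}_X$ with pattern $(S,T)$. Then: (a) for every $X\in\mathcal{P}$, there are at most $(2(k+k'))^k$ distinct patterns among elements of $\mathcal{S}_X$; (b) for every $(P,Q)\in\mathcal{P}_k\times\mathcal{P}_{k'}$, there are at most $(4(k+k'))^k$ distinct sets $\mathcal{S}_Y[S,T]$ (ranging over all $Y\in\mathcal{P}$ and all patterns $(S,T)$) that contain both a pair of the form $(P,R)$ and a pair of the form $(R',Q)$; and if $\mathrm{supp}(P)\cap\mathrm{supp}(Q)=\varnothing$, there are no such sets.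
   Context: $\mathcal{P}$ denotes the set of $n$-fold tensor products of Pauli matrices $\{I,\sigma_x,\sigma_y,\sigma_z\}$. The support $\mathrm{supp}(P)\subseteq[n]$ is the set of qubits on which $P$ acts non-trivially; $\mathcal{P}_j$ is the set of Paulis with $|\mathrm{supp}|\le j$. $[A,B]=AB-BA$. *)

From HB Require Import structures.
From mathcomp Require Import all_boot all_order all_algebra all_field.
Set Implicit Arguments. Unset Strict Implicit. Unset Printing Implicit Defensive.
Import Order.TTheory GRing.Theory Num.Theory.
Local Open Scope ring_scope.

Inductive pauli1 := pI | pX | pY | pZ.

Definition pauli1_to (p : pauli1) : 'I_4 :=
  match p with pI => inord 0 | pX => inord 1 | pY => inord 2 | pZ => inord 3 end.
Definition pauli1_of (i : 'I_4) : pauli1 :=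
  match val i with 0 => pI | 1 => pX | 2 => pY | _ => pZ end.
Lemma pauli1_toK : cancel pauli1_to pauli1_of.
Proof. by case; rewrite /pauli1_of /= inordK. Qed.
HB.instance Definition _ := Equality.copy pauli1 (can_type pauli1_toK).
HB.instance Definition _ := Choice.copy pauli1 (can_type pauli1_toK).
HB.instance Definition _ := Countable.copy pauli1 (can_type pauli1_toK).
HB.instance Definition _ := Finite.copy pauli1 (can_type pauli1_toK).

(* Entries of the 2x2 Pauli matrices (basis |0>,|1> encoded as false,true):
   I = [[1,0],[0,1]], X = [[0,1],[1,0]], Y = [[0,-i],[i,0]], Z = [[1,0],[0,-1]]. *)
Definition sigma_entry (p : pauli1) (a b : bool) : algC :=
  match p with
  | pI => if a == b then 1 else 0
  | pX => if a == b then 0 else 1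
  | pY => if a == b then 0 else (if a then 'i else - 'i)
  | pZ => if a == b then (if a then -1 else 1) else 0
  end.

Definition pauli (n : nat) := {ffun 'I_n -> pauli1}.

Definition qbit (n : nat) (a : 'I_(2 ^ n)) (i : 'I_n) : bool := odd (a %/ 2 ^ i).

(* The 2^n x 2^n matrix of the tensor product P_0 (x) ... (x) P_{n-1}
   (entries of a Kronecker product are products of the factor entries). *)
Definition pauli_mx (n : nat) (P : pauli n) : 'M[algC]_(2 ^ n) :=
  \matrix_(a, b) \prod_(i < n) sigma_entry (P i) (qbit a i) (qbit b i).

Definition commmx (m : nat) (A B : 'M[algC]_m) : 'M[algC]_m := A *m B - B *m A.

Definition supp (n : nat) (P : pauli n) : {set 'I_n} := [set i | P i != pI].

Definition in_Cinv (n : nat) (X : pauli n) (pq : pauli n * pauli n) : bool :=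
  (commmx (pauli_mx pq.1) (pauli_mx pq.2) == (2 * 'i) *: pauli_mx X) ||
  (commmx (pauli_mx pq.1) (pauli_mx pq.2) == - (2 * 'i) *: pauli_mx X).

Definition SX (n k k' : nat) (X : pauli n) : {set pauli n * pauli n} :=
  [set pq | [&& in_Cinv X pq, (#|supp pq.1| <= k)%N & (#|supp pq.2| <= k')%N]].

Definition pattern (n : nat) (X : pauli n) (pq : pauli n * pauli n)
  : {set 'I_n} * {set 'I_n} :=
  (supp pq.1 :&: supp X, supp pq.2 :&: supp X).

Definition SXST (n k k' : nat) (X : pauli n) (S T : {set 'I_n})
  : {set pauli n * pauli n} :=
  [set pq in SX k k' X | pattern X pq == (S, T)].

Definition SXST_family (n k k' : nat) (P Q : pauli n)
  : {set {set pauli n * pauli n}} :=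
  [set A | [exists Y : pauli n, exists S : {set 'I_n}, exists T : {set 'I_n},
      A == SXST k k' Y S T]
    && [exists R : pauli n, (P, R) \in A]
    && [exists R' : pauli n, (R', Q) \in A]].

From HB Require Import structures.
From mathcomp Require Import all_boot all_order all_algebra all_field.

(* Since Pauli strings square to the identity and multiply sitewise up to a
   phase, [[P,Q] = ±2iX] forces [X = PQ] together with a site where [P] and
   [Q] anticommute; that site lies in supp P ∩ supp Q ∩ supp X.
   For (P,Q) in S_X, off supp P the string X agrees with Q, so the pattern is
   determined by the nonempty set S = supp P ∩ supp X of at most k sites of
   supp X (which has at most k + k' sites) and one bit per site of S telling
   whether it lies in supp Q.  Listing S in k slots, each holding a site of
   supp X and a bit, gives (2(k+k'))^k.
   A set S_Y[S,T] containing (P,R) and (R',Q) equals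
   S_{R'Q}[supp P ∩ supp Y, supp Q ∩ supp Y], so it is determined by R', whose
   support has at most k sites, all in supp P ∪ supp Q; k slots holding a site
   and a Pauli label give (4(k+k'))^k.  If supp P and supp Q are disjoint, the
   anticommuting site of (P,R) would lie in supp P and in
   supp R ∩ supp Y = supp Q ∩ supp Y, which is impossible. *)

Set Implicit Arguments.
Unset Strict Implicit.
Unset Printing Implicit Defensive.
Import GRing.Theory Num.Theory.

Section SingleQubit.
Local Open Scope ring_scope.

Definition pauli1_flip (p : pauli1) : bool :=
  match p with pX | pY => true | _ => false end.

Definition pauli1_mul (p q : pauli1) : pauli1 :=
  match p, q with
  | pI, q => q | p, pI => p
  | pX, pX | pY, pY | pZ, pZ => pI
  | pX, pY | pY, pX => pZ
  | pY, pZ | pZ, pY => pX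
  | pZ, pX | pX, pZ => pY
  end.

(* [sigma_p sigma_q = pauli1_phase p q * sigma_(pauli1_mul p q)] *)
Definition pauli1_phase (p q : pauli1) : algC :=
  match p, q with
  | pX, pY | pY, pZ | pZ, pX => 'i
  | pY, pX | pZ, pY | pX, pZ => - 'i
  | _, _ => 1
  end.

Lemma sigma_entry_off p (x y : bool) :
  y != x (+) pauli1_flip p -> sigma_entry p x y = 0.
Proof. by case: p; case: x; case: y. Qed.

Lemma sigma_entryM p q (x y : bool) :
  sigma_entry p x (x (+) pauli1_flip p) * sigma_entry q (x (+) pauli1_flip p) y
  = pauli1_phase p q * sigma_entry (pauli1_mul p q) x y.
Proof.
by case: p; case: q; case: x; case: y;
  rewrite /= ?(mulr1, mul1r, mulr0, mul0r, mulrN, mulNr, opprK, mulCii).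
Qed.

Lemma pauli1_mulC : commutative pauli1_mul.
Proof. by case; case. Qed.

Lemma pauli1_mulxx p : pauli1_mul p p = pI.
Proof. by case: p. Qed.

Lemma pauli1_phasexx p : pauli1_phase p p = 1.
Proof. by case: p. Qed.

Lemma pauli1_mul_eqI p q : (pauli1_mul p q == pI) = (p == q).
Proof.
apply/eqP/eqP => [|<-]; last exact: pauli1_mulxx.
by case: p; case: q.
Qed.

Lemma pauli1_phase_asym p q :
  pauli1_phase p q != pauli1_phase q p -> [/\ p != pI, q != pI & p != q].
Proof. by case: p; case: q; rewrite /= ?eqxx //; split; apply/eqP. Qed.

End SingleQubit.

Lemma odd_div_exp2_inj m a b : a < 2 ^ m -> b < 2 ^ m ->
  (forall i, i < m -> odd (a %/ 2 ^ i) = odd (b %/ 2 ^ i)) -> a = b.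
Proof.
elim: m a b => [|m IHm] a b; first by rewrite !ltnS !leqn0 => /eqP-> /eqP->.
move=> a_lt b_lt eq_bits.
have half_eq : a %/ 2 = b %/ 2.
  apply: IHm => [||i lt_im]; rewrite ?ltn_divLR -?expnSr //.
  by have := eq_bits i.+1 lt_im; rewrite expnSr mulnC -!divnMA mulnC.
have := eq_bits 0 isT; rewrite !divn1 => odd_eq.
by rewrite -[a]odd_double_half -[b]odd_double_half odd_eq -!divn2 half_eq.
Qed.

Lemma qbit_inj n (a b : 'I_(2 ^ n)) : qbit a =1 qbit b -> a = b.
Proof.
move=> eq_ab; apply/val_inj/(odd_div_exp2_inj (ltn_ord a) (ltn_ord b)) => i lt_in.
exact: (eq_ab (Ordinal lt_in)).
Qed.

Lemma qbit_neq n (a b : 'I_(2 ^ n)) : a != b -> exists i, qbit a i != qbit b i.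
Proof.
move=> neq_ab; apply/existsP; apply: contraR neq_ab.
by rewrite negb_exists => /forallP eq_ab; apply/eqP/qbit_inj => i; apply/eqP/negPn.
Qed.

Lemma qbit_surj n (f : 'I_n -> bool) : exists a : 'I_(2 ^ n), qbit a =1 f.
Proof.
pose bits (a : 'I_(2 ^ n)) : {ffun 'I_n -> bool} := [ffun i => qbit a i].
have bits_inj : injective bits.
  by move=> a b /ffunP eq_ab; apply: qbit_inj => i; have := eq_ab i; rewrite !ffunE.
have card_le : #|{ffun 'I_n -> bool}| <= #|'I_(2 ^ n)|.
  by rewrite card_ffun card_bool !card_ord.
have /codomP[a fE] := inj_card_onto bits_inj card_le [ffun i => f i].
by exists a => i; have /ffunP/(_ i) := fE; rewrite !ffunE.
Qed.

Section PauliStrings.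
Local Open Scope ring_scope.
Variable n : nat.
Implicit Types (A B X Z : pauli n) (a b : 'I_(2 ^ n)).

Definition pauli_mul A B : pauli n := [ffun i => pauli1_mul (A i) (B i)].

Lemma pauli_mulC : commutative pauli_mul.
Proof. by move=> A B; apply/ffunP => i; rewrite !ffunE pauli1_mulC. Qed.

(* The sum over intermediate indices has a single nonzero term, the index
   obtained from [a] by flipping the bits on which [A] acts as X or Y. *)
Lemma pauli_mxM A B :
  pauli_mx A *m pauli_mx B
  = (\prod_i pauli1_phase (A i) (B i)) *: pauli_mx (pauli_mul A B).
Proof.
apply/matrixP => a b; rewrite !mxE.
have [c cE] := qbit_surj (fun i => qbit a i (+) pauli1_flip (A i)).
rewrite (bigD1 c) //= big1 ?addr0 => [|d neq_dc].
  rewrite !mxE -!big_split /=; apply: eq_bigr => i _.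
  by rewrite cE sigma_entryM ffunE.
have [i neq_i] := qbit_neq neq_dc.
by rewrite !mxE (bigD1 i) //= sigma_entry_off ?mul0r // -cE.
Qed.

Lemma pauli_mx1 Z : (forall i, Z i = pI) -> pauli_mx Z = 1%:M.
Proof.
move=> ZI; apply/matrixP => a b; rewrite !mxE.
have [<-|neq_ab] := eqVneq a b; first by rewrite big1 // => i _; rewrite ZI /= eqxx.
have [i neq_i] := qbit_neq neq_ab.
by rewrite (bigD1 i) //= ZI /= (negbTE neq_i) mul0r.
Qed.

Lemma pauli_mx_sqr X : pauli_mx X *m pauli_mx X = 1%:M.
Proof.
rewrite pauli_mxM big1 => [|i _]; last exact: pauli1_phasexx.
by rewrite scale1r pauli_mx1 // => i; rewrite ffunE pauli1_mulxx.
Qed.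

(* Compare the diagonal entries at the all-zero index and at the index whose
   only set bit is [i]: a factor sigma_x or sigma_y there vanishes, and a
   factor sigma_z changes sign between them. *)
Lemma pauli_mx_scalar Z (s c : algC) :
  s *: pauli_mx Z = c%:M -> c != 0 -> s != 0 /\ forall i, Z i = pI.
Proof.
move=> eZ c_neq0.
have diagE a : s * \prod_i sigma_entry (Z i) (qbit a i) (qbit a i) = c.
  by have := congr1 (fun M : 'M_(2 ^ n) => M a a) eZ; rewrite /= !mxE eqxx mulr1n.
have [a0 a0E] := qbit_surj (fun _ : 'I_n => false).
have s_neq0 : s != 0.
  by apply: contraNneq c_neq0 => s0; rewrite -(diagE a0) s0 mul0r.
split=> // i; have [a1 a1E] := qbit_surj (fun j => j == i).
pose r := \prod_(j | j != i) sigma_entry (Z j) (qbit a0 j) (qbit a0 j).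
have e0 : s * (sigma_entry (Z i) false false * r) = c.
  by rewrite -(diagE a0) (bigD1 i) //= a0E.
have e1 : s * (sigma_entry (Z i) true true * r) = c.
  rewrite -(diagE a1) (bigD1 i) //= a1E eqxx; congr (_ * (_ * _)).
  by apply: eq_bigr => j neq_ji; rewrite a0E a1E (negbTE neq_ji).
case: (Z i) e0 e1 => //= e0 e1; move: c_neq0; rewrite -e0 ?mul0r ?mulr0 ?eqxx //.
by rewrite -eqNr -mulrN -mulNr e1 e0 eqxx.
Qed.

Lemma commmx_pauli A B :
  commmx (pauli_mx A) (pauli_mx B)
  = (\prod_i pauli1_phase (A i) (B i) - \prod_i pauli1_phase (B i) (A i))
    *: pauli_mx (pauli_mul A B).
Proof. by rewrite /commmx !pauli_mxM (pauli_mulC B) scalerBl. Qed.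

Lemma commmx_pauli_scaled A B X (c : algC) : c != 0 ->
  commmx (pauli_mx A) (pauli_mx B) = c *: pauli_mx X ->
  X = pauli_mul A B /\ exists i, [/\ A i != pI, B i != pI & A i != B i].
Proof.
move=> c_neq0; rewrite commmx_pauli; set d := _ - _ => eAB.
have := congr1 (mulmx^~ (pauli_mx X)) eAB.
rewrite /= -!scalemxAl pauli_mx_sqr pauli_mxM scalerA scalemx1.
case/pauli_mx_scalar=> //; rewrite mulf_eq0 negb_or => /andP[d_neq0 _] ABX_I.
split.
  apply/ffunP => i; have /eqP := ABX_I i.
  by rewrite !ffunE pauli1_mul_eqI => /eqP.
have /existsP[i /pauli1_phase_asym] :
    [exists i, pauli1_phase (A i) (B i) != pauli1_phase (B i) (A i)].
  apply: contraNT d_neq0; rewrite negb_exists => /forallP eq_phase.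
  by rewrite /d subr_eq0; apply/eqP/eq_bigr => i _; apply/eqP/negPn.
by exists i.
Qed.

End PauliStrings.

Section PauliSupports.
Variable n : nat.
Implicit Types (A B X Y : pauli n).

Lemma in_Cinv_mul_site X A B : in_Cinv X (A, B) ->
  X = pauli_mul A B /\ exists i, [/\ A i != pI, B i != pI & A i != B i].
Proof.
have two_i_neq0 : (2 * 'i : algC)%R != 0%R by rewrite mulf_neq0 ?neq0Ci ?pnatr_eq0.
by case/orP=> /eqP; apply: commmx_pauli_scaled; rewrite ?oppr_eq0.
Qed.

Lemma mem_supp_mul_out A B i :
  i \notin supp A -> (i \in supp (pauli_mul A B)) = (i \in supp B).
Proof. by rewrite !inE ffunE negbK => /eqP->. Qed.

Lemma pauli_mul_eq A B i : i \notin supp (pauli_mul A B) -> A i = B i.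
Proof. by rewrite inE ffunE negbK pauli1_mul_eqI => /eqP. Qed.

Lemma card_supp_mul A B :
  #|supp (pauli_mul A B)| <= #|supp A| + #|supp B|.
Proof.
apply: leq_trans (leq_card_setU _ _); apply/subset_leq_card/subsetP => i.
rewrite !inE ffunE; apply: contraR; rewrite negb_or !negbK.
by case/andP=> /eqP-> /eqP->.
Qed.

Lemma SX_mul_site k k' Y A B : (A, B) \in SX k k' Y ->
  [/\ Y = pauli_mul A B, exists i, [&& i \in supp A, i \in supp B & i \in supp Y],
      #|supp A| <= k & #|supp B| <= k'].
Proof.
rewrite inE => /and3P[/in_Cinv_mul_site[YE [i [Ai Bi neq_AB]]] Ak Bk'].
by split=> //; exists i; rewrite !inE Ai Bi YE ffunE /= pauli1_mul_eqI.
Qed.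

End PauliSupports.

Section LabelledSubsets.
Variables (T rT : finType) (r0 : rT) (U : {set T}) (k : nat).

Definition labelled_subsets : {set {set T} * {ffun T -> rT}} :=
  [set Sf : {set T} * {ffun T -> rT}
  | [&& Sf.1 \subset U, 0 < #|Sf.1| <= k & [forall x in ~: Sf.1, Sf.2 x == r0]]].

Definition slot_lists : {set {ffun 'I_k -> T * rT}} :=
  [set g : {ffun 'I_k -> T * rT} | [forall j, (g j).1 \in U]].

Definition read_slots (g : {ffun 'I_k -> T * rT}) : {set T} * {ffun T -> rT} :=
  ([set (g j).1 | j : 'I_k],
   [ffun x => if [pick j | (g j).1 == x] is Some j then (g j).2 else r0]).

Lemma card_slot_lists : #|slot_lists| = (#|U| * #|rT|) ^ k.
Proof.
rewrite -cardsT -cardsX -[k in RHS]card_ord -card_ffun_on.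
apply: eq_card => g; rewrite inE; apply/forallP/ffun_onP => g_U j.
  by rewrite inE /= g_U inE.
by have := g_U j; rewrite inE => /andP[].
Qed.

(* Fill the k slots with the points of S in the order of [enum S], repeating
   a point of S once S is exhausted. *)
Lemma labelled_subsets_read_slots :
  labelled_subsets \subset read_slots @: slot_lists.
Proof.
apply/subsetP => -[S f]; rewrite inE /= => /and3P[SU /andP[S_gt0 Sk] /forall_inP f_off].
have /set0Pn[x0 Sx0] : S != set0 by rewrite -card_gt0.
pose x_ (j : 'I_k) := nth x0 (enum S) j.
have x_S j : x_ j \in S.
  have [lt_j|ge_j] := ltnP j (size (enum S)); last by rewrite /x_ nth_default.
  by rewrite -mem_enum mem_nth.
have x_onto x : x \in S -> exists j, x_ j = x.
  move=> Sx; have lt_x : index x (enum S) < k.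
    by apply: leq_trans Sk; rewrite cardE index_mem mem_enum.
  by exists (Ordinal lt_x); rewrite /x_ /= nth_index ?mem_enum.
apply/imsetP; exists [ffun j => (x_ j, f (x_ j))].
  by rewrite inE; apply/forallP => j; rewrite ffunE (subsetP SU _ (x_S j)).
congr pair.
  apply/setP => x; apply/idP/imsetP => [/x_onto[j <-]|[j _ ->]].
    by exists j; rewrite ?ffunE.
  by rewrite ffunE x_S.
apply/ffunP => x; rewrite !ffunE; case: pickP => [j /eqP <-|no_j].
  by rewrite ffunE.
have [/x_onto[j x_jE]|notSx] := boolP (x \in S).
  by have := no_j j; rewrite ffunE x_jE eqxx.
by apply/eqP/f_off; rewrite inE.
Qed.

Lemma card_labelled_subsets : #|labelled_subsets| <= (#|U| * #|rT|) ^ k.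
Proof.
rewrite -card_slot_lists.
exact: leq_trans (subset_leq_card labelled_subsets_read_slots) (leq_imset_card _ _).
Qed.

End LabelledSubsets.

Lemma leq_expn2r m n e : m <= n -> m ^ e <= n ^ e.
Proof. by move=> le_mn; elim: e => // e IHe; rewrite !expnS leq_mul. Qed.

Lemma card_pauli1 : #|{: pauli1}| <= 4.
Proof. by rewrite -[4]card_ord (leq_card _ (can_inj pauli1_toK)). Qed.

Section Counting.
Variables (n k k' : nat).
Implicit Types (P Q X Y : pauli n).

Lemma card_patterns X :
  #|[set pattern X pq | pq in SX k k' X]| <= (2 * (k + k')) ^ k.
Proof.
have [->|[[P0 Q0] /SX_mul_site[XE _ P0k Q0k']]] := set_0Vmem (SX k k' X).
  by rewrite imset0 cards0.
have suppX : #|supp X| <= k + k'.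
  by rewrite XE (leq_trans (card_supp_mul _ _)) ?leq_add.
pose unlabel (Sf : {set 'I_n} * {ffun 'I_n -> bool}) :=
  (Sf.1, [set x | Sf.2 x] :|: (supp X :\: Sf.1)).
have sub : [set pattern X pq | pq in SX k k' X]
    \subset unlabel @: labelled_subsets false (supp X) k.
  apply/subsetP => _ /imsetP[[P Q] /SX_mul_site[{}XE [i /and3P[Pi _ Xi]] Pk _] ->].
  pose S := supp P :&: supp X.
  apply/imsetP; exists (S, [ffun x => (x \in S) && (x \in supp Q)]).
    rewrite inE /= subsetIr card_gt0 (leq_trans (subset_leq_card (subsetIl _ _)) Pk).
    rewrite andbT /=; apply/andP; split.
      by apply/set0Pn; exists i; rewrite in_setI Pi Xi.
    by apply/forall_inP => x; rewrite inE => /negbTE nSx; rewrite ffunE /= nSx.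
  congr pair; apply/setP => x.
  rewrite in_setU in_setD [in RHS]in_set ffunE /S !in_setI.
  have [_|nPx] := boolP (x \in supp P); last by rewrite XE mem_supp_mul_out //= andbb.
  by case: (x \in supp X); case: (x \in supp Q).
apply: leq_trans (subset_leq_card sub) _; apply: leq_trans (leq_imset_card _ _) _.
apply: leq_trans (card_labelled_subsets _ _ _) _.
by rewrite card_bool mulnC leq_expn2r ?leq_mul2l.
Qed.

Lemma mem_SXST_family P Q A : A \in SXST_family k k' P Q ->
  exists Y R R', [/\ A = SXST k k' Y (supp P :&: supp Y) (supp Q :&: supp Y),
     (P, R) \in SX k k' Y, (R', Q) \in SX k k' Y,
     supp R :&: supp Y = supp Q :&: supp Y &
     supp R' :&: supp Y = supp P :&: supp Y].
Proof.
rewrite inE => /andP[/andP[/existsP[Y /existsP[S /existsP[T /eqP AE]]]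
  /existsP[R PR]] /existsP[R' R'Q]].
move: PR R'Q; rewrite AE !inE /pattern /=.
move=> /andP[PR /eqP[PYE RYE]] /andP[R'Q /eqP[R'YE QYE]].
by exists Y, R, R'; rewrite -PYE -QYE !inE RYE R'YE.
Qed.

Lemma card_SXST_family P Q : #|supp P| <= k -> #|supp Q| <= k' ->
  #|SXST_family k k' P Q| <= (4 * (k + k')) ^ k.
Proof.
move=> Pk Qk'; pose U := supp P :|: supp Q.
pose SXST_of (Sf : {set 'I_n} * pauli n) :=
  let Y := pauli_mul Sf.2 Q in SXST k k' Y (supp P :&: supp Y) (supp Q :&: supp Y).
have sub : SXST_family k k' P Q \subset SXST_of @: labelled_subsets pI U k.
  apply/subsetP => A /mem_SXST_family[Y [R [R' [-> _ R'Q _ R'YE]]]].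
  have [YE [i /and3P[R'i _ _]] R'k _] := SX_mul_site R'Q.
  apply/imsetP; exists (supp R', R'); last by rewrite /SXST_of -YE.
  rewrite inE /= R'k card_gt0 andbT; apply/and3P; split.
  - apply/subsetP => x R'x; rewrite in_setU.
    have [Yx|nYx] := boolP (x \in supp Y).
      have : x \in supp R' :&: supp Y by rewrite in_setI R'x Yx.
      by rewrite R'YE in_setI => /andP[->].
    rewrite YE in nYx; move: R'x.
    by rewrite !inE (pauli_mul_eq nYx) orbC => ->.
  - by apply/set0Pn; exists i.
  - by apply/forall_inP => x; rewrite !inE negbK.
apply: leq_trans (subset_leq_card sub) _; apply: leq_trans (leq_imset_card _ _) _.
apply: leq_trans (card_labelled_subsets _ _ _) _.
rewrite mulnC leq_expn2r // leq_mul ?card_pauli1 //.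
exact: leq_trans (leq_card_setU _ _) (leq_add Pk Qk').
Qed.

Lemma SXST_family_disjoint P Q :
  supp P :&: supp Q = set0 -> SXST_family k k' P Q = set0.
Proof.
move=> PQ0; apply/setP => A; rewrite in_set0; apply/negbTE/negP.
case/mem_SXST_family=> Y [R [_ [_ PR _ RYE _]]].
have [_ [i /and3P[Pi Ri Yi]] _ _] := SX_mul_site PR.
have : i \in supp R :&: supp Y by rewrite in_setI Ri Yi.
rewrite RYE in_setI => /andP[Qi _].
suff : i \in supp P :&: supp Q by rewrite PQ0 inE.
by rewrite in_setI Pi Qi.
Qed.

End Counting.

Theorem lemma3p6 (n k k' : nat) (hk : (1 <= k)%N) (hk' : (1 <= k')%N) :
  (forall X : pauli n,
      (#|[set pattern X pq | pq in SX k k' X]| <= (2 * (k + k')) ^ k)%N)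
  /\
  (forall P Q : pauli n, (#|supp P| <= k)%N -> (#|supp Q| <= k')%N ->
      (#|SXST_family k k' P Q| <= (4 * (k + k')) ^ k)%N
      /\ (supp P :&: supp Q = set0 -> SXST_family k k' P Q = set0)).
Proof.
(* The bounds hold for all k and k'. *)
split=> [X | P Q Pk Qk']; first exact: card_patterns.
by split; [exact: card_SXST_family | exact: SXST_family_disjoint].
Qed.
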